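(* Let $\mu,q$ be positive integers with $q\ge 2$. There is a bijection between the set of isomorphism classes of symmetric $(\mu,q)$-nets and the set of equivalence classes of codes $C\subseteq[q]^{\mu q}$ with $|C|=\mu q^2$ and minimum Hamming distance at least $\mu q-\mu$.
   Context: $[q]=\{0,\dots,q-1\}$; the Hamming distance of two words is the number of coordinates in which they differ. A symmetric $(\mu,q)$-net is a pair $(X,\mathcal B)$ where $X$ is a set of $\mu q^2$ points and $\mathcal B$ is a collection of subsets of $X$ of size $\mu q$ (blocks) such that: (s1) $\mathcal B$ can be partitioned into $\mu q$ classes (block parallel classes), each of which is a partition of $X$; (s2) any two blocks belonging to different block parallel classes intersect in exactly $\mu$ points; (s3) $X$ can be partitioned into $\mu q$ sets of $q$ points (point parallel classes) such that any two points from different point parallel classes lie together in exactly $\mu$ blocks, while two distinct points from the same point parallel class lie together in no block. Two symmetric nets $(X,\mathcal B)$ and $(X',\mathcal B')$ are isomorphic if there is a bijection $\phi:X\to X'$ with $\{\phi(B):B\in\mathcal B\}=\mathcal B'$. Two codes $C,D\subseteq[q]^n$ are equivalent if $D$ is obtained from $C$ by permuting the $n$ coordinates and then applying, in each coordinate separately, a permutation of the symbols $[q]$. *)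

From mathcomp Require Import all_boot fingroup perm.
Set Implicit Arguments. Unset Strict Implicit. Unset Printing Implicit Defensive.

(* Points of a symmetric (mu,q)-net: the mu*q^2 points are taken to be 'I_(mu*q^2). *)
Definition npts (mu q : nat) := (mu * q ^ 2)%N.

Definition sym_net (mu q : nat) (B : {set {set 'I_(npts mu q)}}) : Prop :=
  (forall b, b \in B -> #|b| = (mu * q)%N) /\
  (* (s1) + (s2): a partition of B into mu*q block parallel classes *)
  (exists c : {set 'I_(npts mu q)} -> 'I_(mu * q),
     (forall i : 'I_(mu * q), partition [set b in B | c b == i] [set: 'I_(npts mu q)]) /\
     (forall b1 b2, b1 \in B -> b2 \in B -> c b1 != c b2 -> #|b1 :&: b2| = mu)) /\
  (* (s3): a partition of the points into mu*q point parallel classes of size q *)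
  (exists p : 'I_(npts mu q) -> 'I_(mu * q),
     (forall i : 'I_(mu * q), #|[set x | p x == i]| = q) /\
     (forall x y, x != y ->
        #|[set b in B | (x \in b) && (y \in b)]| = (if p x != p y then mu else 0%N))).

Definition net_iso (mu q : nat) (B B' : {set {set 'I_(npts mu q)}}) : Prop :=
  exists phi : {perm 'I_(npts mu q)}, [set (fun x => phi x) @: b | b : {set 'I_(npts mu q)} in B] = B'.

Definition word (n q : nat) := {ffun 'I_n -> 'I_q}.

Definition hamming (n q : nat) (u v : word n q) : nat := #|[set i | u i != v i]|.

Definition good_code (mu q : nat) (C : {set word (mu * q) q}) : Prop :=
  #|C| = npts mu q /\
  (forall u v, u \in C -> v \in C -> u != v -> (mu * q - mu <= hamming u v)%N).

Definition code_equiv (n q : nat) (C D : {set word n q}) : Prop :=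
  exists (sigma : {perm 'I_n}) (tau : 'I_n -> {perm 'I_q}),
    D = [set [ffun i => tau i (w (sigma i))] | w : word n q in C].

From mathcomp Require Import all_boot fingroup perm zify_ssreflect.
From Stdlib Require Import Lia ClassicalEpsilon.
Set Implicit Arguments. Unset Strict Implicit. Unset Printing Implicit Defensive.

(* Put n = mu q.  A map e from the points to words of length n determines the
   "fibres" fibre e i a = {x | e x i = a}, the candidate blocks.  The minimum
   distance condition says that distinct words agree in at most mu coordinates.
   - Plotkin-type counting (Cauchy-Schwarz on how one fibre meets the fibres
     of the other coordinates) shows that for mu q^2 such words every fibre
     has n points, fibres of distinct coordinates meet in mu points, and two
     distinct words agree in 0 or mu coordinates.
   - Hence "agreeing nowhere" is an equivalence relation with classes of size
     q, and the fibres of a good code form a symmetric net (the fibres of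
     coordinate i being the i-th block parallel class).
   - Conversely, labelling the blocks of each block parallel class of a net by
     [q] yields a word map whose fibres are the blocks.
   - Rigidity: two such word maps with the same fibres differ by a permutation
     of coordinates and of the symbols in each coordinate.
   The theorem maps a net to a code whose fibre net is isomorphic to it;
   relabelling points turns code equivalence into net isomorphism, and
   rigidity gives the converse. *)

(* Discrete Cauchy-Schwarz with its equality case, doubled so as to stay in
   nat: (sum_i s_i)^2 <= |I| sum_i s_i^2, with equality iff s is constant.
   Summing nat_Cauchy, 2 s_a s_b <= s_a^2 + s_b^2, over all pairs (a, b). *)
Lemma cauchy_schwarz_nat (I : finType) (s : I -> nat) :
  2 * (\sum_i s i) ^ 2 <= 2 * (#|I| * \sum_i s i ^ 2)
    ?= iff [forall a, forall b, s a == s b].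
Proof.
have -> : 2 * (\sum_i s i) ^ 2 = \sum_a \sum_b 2 * (s a * s b).
  rewrite expnS expn1 big_distrl /= big_distrr /=; apply: eq_bigr => a _.
  by rewrite big_distrr /= big_distrr.
have -> : 2 * (#|I| * \sum_i s i ^ 2) = \sum_a \sum_b (s a ^ 2 + s b ^ 2).
  under [RHS]eq_bigr do rewrite big_split /= sum_nat_const cardT -cardE.
  by rewrite big_split /= -big_distrr /= sum_nat_const cardT -cardE mul2n addnn.
exact: leqif_sum (fun a _ => leqif_sum (fun b _ => nat_Cauchy (s a) (s b))).
Qed.

Lemma cauchy_schwarz_le (I : finType) (s : I -> nat) :
  (\sum_i s i) ^ 2 <= #|I| * \sum_i s i ^ 2.
Proof. by have [le_s _] := cauchy_schwarz_nat s; rewrite leq_pmul2l in le_s. Qed.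

Lemma cauchy_schwarz_eq (I : finType) (s : I -> nat) :
  (\sum_i s i) ^ 2 = #|I| * \sum_i s i ^ 2 -> forall a b, s a = s b.
Proof.
move=> eq_s a b; have [_] := cauchy_schwarz_nat s.
by rewrite eq_s eqxx => /esym/forallP/(_ a)/forallP/(_ b)/eqP.
Qed.

(* The arithmetic core of the Plotkin bound: after cancelling the common
   factor m, the two estimates of the agreement count force m <= n. *)
Lemma plotkin_arith n q m : 1 < q ->
  (q + n.-1) * m ^ 2 <= m * (q * n + m.-1 * n) -> m <= n.
Proof.
case: m => [//|m] q_gt1; rewrite expnS expn1 mulnCA leq_pmul2l //= => le_m.
have : q * m.+1 + n.-1 * m.+1 <= q * n + m * n by rewrite -mulnDl.
nia.
Qed.

Lemma card_set_indicator (T : finType) (P : pred T) :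
  #|[set x | P x]| = \sum_x (P x : nat).
Proof. by rewrite -sum1dep_card big_mkcond; apply: eq_bigr => x _; case: (P x). Qed.

Section ImageLabel.
Variables (T U : finType) (f : T -> U) (k : nat).
Hypothesis card_image : #|[set f x | x in T]| = k.

Lemma image_index_lt x : index (f x) (enum [set f y | y in T]) < k.
Proof. by rewrite -card_image cardE index_mem mem_enum imset_f. Qed.

Definition image_label x : 'I_k := Ordinal (image_index_lt x).

Lemma image_label_eq x y : (image_label x == image_label y) = (f x == f y).
Proof.
apply/eqP/eqP => [[] | eq_f]; last by apply: val_inj => /=; rewrite eq_f.
move/(congr1 (nth (f x) (enum [set f z | z in T]))).
by rewrite !nth_index // mem_enum imset_f.
Qed.

Lemma image_label_onto j : exists x, image_label x = j.
Proof.
have j_lt : j < size (enum [set f y | y in T]) by rewrite -cardE card_image.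
have : 0 < #|[set f y | y in T]| by rewrite card_image (leq_ltn_trans _ (ltn_ord j)).
case/card_gt0P => _ /imsetP [x0 _ _].
have /imsetP [x _ eq_x] : nth (f x0) (enum [set f y | y in T]) j \in [set f y | y in T].
  by rewrite -mem_enum mem_nth.
by exists x; apply: val_inj => /=; rewrite -eq_x index_uniq ?enum_uniq.
Qed.

End ImageLabel.

Section Fibres.
Variables (T : finType) (n q : nat).
Implicit Types (u v : word n q) (e : T -> word n q) (A : {set T}).

Definition agree u v := #|[set i | u i == v i]|.

Lemma hamming_agree u v : hamming u v + agree u v = n.
Proof.
rewrite /hamming /agree addnC.
have -> : [set i | u i != v i] = ~: [set i | u i == v i] by apply/setP => i; rewrite !inE.
by rewrite cardsC card_ord.
Qed.

Lemma agree_self u : agree u u = n.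
Proof.
rewrite /agree -[RHS]card_ord -cardsT.
by apply: eq_card => i; rewrite !inE eqxx.
Qed.

Definition fibre e (i : 'I_n) (a : 'I_q) : {set T} := [set x | e x i == a].
Definition fibres e := [set fibre e i a | i : 'I_n, a : 'I_q].

Lemma disjoint_fibres e i a b : a != b -> #|fibre e i a :&: fibre e i b| = 0.
Proof.
move=> ab; apply/eqP; rewrite cards_eq0; apply/eqP/setP => x; rewrite !inE.
by apply: contraNF ab => /andP[/eqP <- /eqP <-].
Qed.

Lemma sum_agree e A x :
  \sum_(y in A) agree (e x) (e y) = \sum_j #|A :&: fibre e j (e x j)|.
Proof.
rewrite /agree; under eq_bigr do rewrite card_set_indicator.
rewrite exchange_big /=; apply: eq_bigr => j _.
rewrite -sum1_card big_mkcond /= [RHS]big_mkcond /=.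
by apply: eq_bigr => y _; rewrite !inE eq_sym; case: (y \in A).
Qed.

Lemma sum_card_fibres e A j : \sum_a #|A :&: fibre e j a| = #|A|.
Proof.
rewrite -sum1_card (partition_big (fun x => e x j) predT) //=.
by apply: eq_bigr => a _; rewrite -sum1_card; apply: eq_bigl => x; rewrite !inE.
Qed.

Lemma sum_fibre_squares e A j :
  \sum_(x in A) #|A :&: fibre e j (e x j)| = \sum_a #|A :&: fibre e j a| ^ 2.
Proof.
rewrite (partition_big (fun x => e x j) predT) //=; apply: eq_bigr => a _.
rewrite (eq_bigr (fun _ => #|A :&: fibre e j a|)); last by move=> x /andP[_ /eqP ->].
rewrite sum_nat_const expnS expn1; congr (_ * _).
by apply: eq_card => x; rewrite !inE.
Qed.

End Fibres.

Section PlotkinBound.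
Variables (T : finType) (mu q : nat).
Hypotheses (mu_gt0 : 0 < mu) (q_gt1 : 1 < q).
Local Notation n := (mu * q).
Hypothesis card_T : #|T| = q * n.
Variable e : T -> word n q.
Hypothesis agree_le : forall x y, x != y -> agree (e x) (e y) <= mu.

Let n_gt0 : 0 < n. Proof. by rewrite muln_gt0 mu_gt0 ltnW. Qed.

Lemma sum_agree_leqif (A : {set T}) x : x \in A ->
  \sum_(y in A) agree (e x) (e y) <= n + #|A|.-1 * mu
     ?= iff [forall (y | (y \in A) && (y != x)), agree (e x) (e y) == mu].
Proof.
move=> xA; rewrite (bigD1 x) //= agree_self.
have -> : #|A|.-1 * mu = \sum_(y in A | y != x) mu.
  rewrite sum_nat_const -subn1 (cardD1x xA) addKn.
  by congr (#|_| * _); apply/setP => y; rewrite !inE.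
have agree_y y : (y \in A) && (y != x) ->
    agree (e x) (e y) <= mu ?= iff (agree (e x) (e y) == mu).
  by case/andP=> _ yx; apply/leqif_eq/agree_le; rewrite eq_sym.
by have := leqif_add (leqif_eq (leqnn n)) (leqif_sum agree_y); rewrite eqxx.
Qed.

Section OneFibre.
Variables (i : 'I_n) (a : 'I_q).
Local Notation A := (fibre e i a).
Local Notation m := #|fibre e i a|.
Local Notation X := (\sum_(x in A) \sum_(y in A) agree (e x) (e y)).
Local Notation Q j := (\sum_b #|A :&: fibre e j b| ^ 2).

Lemma agreements_upper : X <= m * (n + m.-1 * mu).
Proof. by rewrite -sum_nat_const; apply: leq_sum => x xA; rewrite (sum_agree_leqif xA). Qed.

Lemma agreements_by_coord : X = \sum_j Q j.
Proof.
under eq_bigr do rewrite sum_agree.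
by rewrite exchange_big /=; apply: eq_bigr => j _; exact: sum_fibre_squares.
Qed.

Lemma coord_own_contribution : Q i = m ^ 2.
Proof.
rewrite (bigD1 a) //= setIid big1 ?addn0 // => b ba.
by rewrite disjoint_fibres // eq_sym.
Qed.

Lemma coord_other_contribution j : m ^ 2 <= q * Q j.
Proof.
have := cauchy_schwarz_le (fun b => #|A :&: fibre e j b|).
by rewrite sum_card_fibres card_ord.
Qed.

Lemma card_other_coords : #|[pred j : 'I_n | j != i]| = n.-1.
Proof. by rewrite cardC1 card_ord. Qed.

Lemma agreements_lower_leqif :
  q * m ^ 2 + n.-1 * m ^ 2 <= q * X
    ?= iff [forall (j | j != i), m ^ 2 == q * Q j].
Proof.
rewrite agreements_by_coord big_distrr /= (bigD1 i) //= coord_own_contribution.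
rewrite -card_other_coords -sum_nat_const.
have other_j j : j != i -> m ^ 2 <= q * Q j ?= iff (m ^ 2 == q * Q j).
  by move=> _; apply/leqif_eq/coord_other_contribution.
by have := leqif_add (leqif_eq (leqnn (q * m ^ 2))) (leqif_sum other_j); rewrite eqxx.
Qed.

Lemma fibre_card_le : m <= n.
Proof.
apply: (plotkin_arith (q := q)) => //.
have [le_X _] := agreements_lower_leqif.
rewrite mulnDl; apply: (leq_trans le_X).
have -> : m * (q * n + m.-1 * n) = q * (m * (n + m.-1 * mu)) by nia.
by rewrite leq_mul2l agreements_upper orbT.
Qed.

(* When the fibre is as large as possible, all estimates are equalities. *)
Hypothesis m_eq : m = n.

Lemma agreements_tight : q * X = q * m ^ 2 + n.-1 * m ^ 2.
Proof.
apply/eqP; rewrite eqn_leq agreements_lower_leqif.1 andbT.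
have -> : q * m ^ 2 + n.-1 * m ^ 2 = q * (m * (n + m.-1 * mu)) by rewrite m_eq; nia.
by rewrite leq_mul2l agreements_upper orbT.
Qed.

(* Equality in the upper estimate: points of A pairwise agree in mu places. *)
Lemma agree_in_fibre x y : x \in A -> y \in A -> x != y -> agree (e x) (e y) = mu.
Proof.
move=> xA yA xy.
have X_eq : X = m * (n + m.-1 * mu).
  apply/eqP; rewrite -(eqn_pmul2l (ltnW q_gt1)) agreements_tight m_eq; apply/eqP; nia.
have [_] := leqif_sum (fun x (xA : x \in A) => sum_agree_leqif xA).
rewrite sum_nat_const X_eq eqxx => /esym/forall_inP/(_ x xA)/forall_inP/(_ y).
by rewrite yA eq_sym xy => /(_ isT)/eqP.
Qed.

(* Equality in Cauchy-Schwarz: A meets the q fibres of any other coordinate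
   equally, hence in n / q = mu points each. *)
Lemma card_fibre_meet j b : j != i -> #|A :&: fibre e j b| = mu.
Proof.
move=> ji.
have Qj_eq : m ^ 2 = q * Q j.
  have [_] := agreements_lower_leqif.
  by rewrite agreements_tight eqxx => /esym/forall_inP/(_ j ji)/eqP.
have s_const := cauchy_schwarz_eq (s := fun b => #|A :&: fibre e j b|).
rewrite sum_card_fibres card_ord -Qj_eq in s_const.
have := sum_card_fibres e A j.
rewrite (eq_bigr _ (fun b' _ => s_const erefl b' b)) sum_nat_const card_ord m_eq.
by rewrite [RHS]mulnC => /eqP; rewrite eqn_pmul2l ?(ltnW q_gt1) // => /eqP.
Qed.

End OneFibre.

(* The q fibres of coordinate i partition the q n points and have at most n
   points each, so each has exactly n points. *)
Lemma fibre_card i a : #|fibre e i a| = n.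
Proof.
have [_] := leqif_sum (fun b (_ : true) => leqif_eq (fibre_card_le i b)).
have -> : \sum_(b < q) #|fibre e i b| = \sum_(b < q) n.
  rewrite sum_nat_const card_ord -card_T -cardsT -(sum_card_fibres e setT i).
  by apply: eq_bigr => b _; rewrite setTI.
by rewrite eqxx => /esym/forall_inP/(_ a isT)/eqP.
Qed.

Lemma agree_eq_mu x y i : x != y -> e x i == e y i -> agree (e x) (e y) = mu.
Proof.
move=> xy eq_i; apply: (agree_in_fibre (i := i) (a := e x i)) => //.
- exact: fibre_card.
- by rewrite inE.
- by rewrite inE eq_sym.
Qed.

Lemma fibre_meet i j a b : i != j -> #|fibre e i a :&: fibre e j b| = mu.
Proof. by move=> ij; apply: card_fibre_meet; [exact: fibre_card | rewrite eq_sym]. Qed.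

Lemma fibre_nonempty i a : exists x, x \in fibre e i a.
Proof. by apply/set0Pn; rewrite -card_gt0 fibre_card. Qed.

Lemma fibre_inj i j a b : fibre e i a = fibre e j b -> i = j /\ a = b.
Proof.
move=> eq_ij.
have ij : i = j.
  apply/eqP; apply: contraT => ij.
  have := fibre_meet a b ij; rewrite eq_ij setIid fibre_card => /eqP.
  by rewrite -{2}[mu]muln1 eqn_pmul2l // => /eqP q1; move: q_gt1; rewrite q1.
split => //; subst j; have [x xa] := fibre_nonempty i a.
by move: xa (xa); rewrite {2}eq_ij !inE => /eqP <- /eqP.
Qed.

End PlotkinBound.

Section ParallelClasses.
Variables (T : finType) (mu q : nat).
Hypotheses (mu_gt0 : 0 < mu) (q_gt1 : 1 < q).
Local Notation n := (mu * q).
Hypothesis card_T : #|T| = q * n.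
Variable e : T -> word n q.
Hypothesis agree_le : forall x y, x != y -> agree (e x) (e y) <= mu.

Let n_gt0 : 0 < n. Proof. by rewrite muln_gt0 mu_gt0 ltnW. Qed.
Let i0 : 'I_n := Ordinal n_gt0.

Definition apart x y := [forall i, e x i != e y i].

Lemma apart_sym x y : apart x y = apart y x.
Proof. by apply/forallP/forallP => xy i; rewrite eq_sym. Qed.

Lemma apart_irrefl x : ~~ apart x x.
Proof. by apply/forallPn; exists i0; rewrite eqxx. Qed.

Lemma agree_dichotomy x y : x != y ->
  agree (e x) (e y) = if apart x y then 0 else mu.
Proof.
move=> xy; case: ifP => [/forallP apart_xy | /negbT/forallPn [i]].
  apply/eqP; rewrite cards_eq0; apply/eqP/setP => i.
  by rewrite !inE (negbTE (apart_xy i)).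
by rewrite negbK; apply: agree_eq_mu.
Qed.

(* A fibre not containing x contains exactly one point apart from x: x agrees
   with the n points of the fibre in (n - 1) mu coordinates in total, and with
   each of them in 0 or mu coordinates. *)
Lemma unique_apart_in_fibre x i a : e x i != a ->
  #|fibre e i a :&: [set y | apart x y]| = 1.
Proof.
move=> xa; set A := fibre e i a.
have sum_other : \sum_(y in A) agree (e x) (e y) = n.-1 * mu.
  rewrite sum_agree (bigD1 i) //=.
  rewrite disjoint_fibres 1?eq_sym // add0n (eq_bigr (fun _ => mu)) => [|j ji]; last first.
    by apply: fibre_meet => //; rewrite eq_sym.
  by rewrite sum_nat_const cardC1 card_ord.
have sum_dich : \sum_(y in A) agree (e x) (e y) = #|A :\: [set y | apart x y]| * mu.
  rewrite -sum_nat_const big_mkcond [RHS]big_mkcond /=; apply: eq_bigr => y _.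
  rewrite !inE; case yA: (e y i == a); rewrite ?andbF //= andbT.
  have xy : x != y by apply: contraNneq xa => ->.
  by rewrite agree_dichotomy //; case: (apart x y).
have : #|A :\: [set y | apart x y]| = n.-1.
  by apply/eqP; rewrite -(eqn_pmul2r mu_gt0) -sum_dich sum_other.
move: (cardsID [set y | apart x y] A); rewrite (fibre_card mu_gt0 q_gt1 card_T agree_le).
lia.
Qed.

Lemma apart_trans x y z : apart x y -> apart x z -> y != z -> apart y z.
Proof.
move=> xy xz yz; apply/forallP => i; apply: contraNneq yz => eq_yz.
have /card_le1_eqP uniq_y : #|fibre e i (e y i) :&: [set y' | apart x y']| <= 1.
  by rewrite unique_apart_in_fibre //; move/forallP: xy.
by apply/eqP/uniq_y; rewrite !inE ?eq_yz eqxx.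
Qed.

Definition parallel x y := (x == y) || apart x y.
Definition pclass x := [set y | parallel x y].

Lemma parallel_sym x y : parallel x y = parallel y x.
Proof. by rewrite /parallel eq_sym apart_sym. Qed.

Lemma parallel_trans x y z : parallel x y -> parallel y z -> parallel x z.
Proof.
rewrite /parallel => /orP[/eqP -> // | xy] /orP[/eqP <- | yz]; first by rewrite xy orbT.
have [-> // | xz] := eqVneq x z.
by apply/orP; right; apply: (apart_trans (x := y)); rewrite // apart_sym.
Qed.

Lemma pclass_self x : x \in pclass x.
Proof. by rewrite inE /parallel eqxx. Qed.

Lemma pclass_eq x y : y \in pclass x -> pclass y = pclass x.
Proof.
rewrite inE => xy; apply/setP => z; rewrite !inE.
apply/idP/idP => [|xz]; first exact: parallel_trans.
by apply: parallel_trans xz; rewrite parallel_sym.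
Qed.

(* x plus one apart point in each of the q - 1 fibres of coordinate i0 not
   containing x. *)
Lemma pclass_card x : #|pclass x| = q.
Proof.
have card_apart : #|[set y | apart x y]| = q.-1.
  rewrite -(sum_card_fibres e _ i0) (bigD1 (e x i0)) //=.
  have -> : #|[set y | apart x y] :&: fibre e i0 (e x i0)| = 0.
    apply/eqP; rewrite cards_eq0; apply/eqP/setP => y; rewrite !inE.
    by apply/negbTE/negP => /andP[/forallP/(_ i0) + /eqP eq_y]; rewrite eq_y eqxx.
  rewrite add0n (eq_bigr (fun _ => 1)) => [|b bx]; last first.
    by rewrite setIC unique_apart_in_fibre // eq_sym.
  by rewrite sum_nat_const muln1 cardC1 card_ord.
have -> : pclass x = x |: [set y | apart x y] by apply/setP => y; rewrite !inE eq_sym.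
by rewrite cardsU1 card_apart inE (negbTE (apart_irrefl x)) add1n prednK // ltnW.
Qed.

Lemma pclass_eqE x y : (pclass x == pclass y) = parallel x y.
Proof.
apply/eqP/idP => [eq_xy | xy]; last by rewrite (@pclass_eq x y) ?inE.
by move: (pclass_self y); rewrite -eq_xy inE.
Qed.

Definition pclasses := [set pclass x | x in T].

Lemma pclasses_partition : partition pclasses [set: T].
Proof.
apply/and3P; split.
- apply/eqP/setP => x; rewrite inE; apply/bigcupP.
  by exists (pclass x); [exact: imset_f | exact: pclass_self].
- apply/trivIsetP => _ _ /imsetP[x _ ->] /imsetP[y _ ->] xy.
  apply/pred0P => z /=; apply: contraNF xy => /andP[zx zy].
  by rewrite -(pclass_eq zx) -(pclass_eq zy).
- by apply/imsetP => [[x _ eq_x]]; move: (pclass_self x); rewrite -eq_x inE.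
Qed.

Lemma card_pclasses : #|pclasses| = n.
Proof.
have := card_partition pclasses_partition.
rewrite cardsT card_T (eq_bigr (fun _ => q)) => [|_ /imsetP[x _ ->]]; last exact: pclass_card.
by rewrite sum_nat_const mulnC => /eqP; rewrite eqn_pmul2r ?(ltnW q_gt1) // => /eqP.
Qed.

End ParallelClasses.

Lemma card_points mu q : #|'I_(npts mu q)| = q * (mu * q).
Proof. by rewrite card_ord /npts; nia. Qed.

Section FibreNet.
Variables mu q : nat.
Hypotheses (mu_gt0 : 0 < mu) (q_gt1 : 1 < q).
Local Notation n := (mu * q).
Local Notation N := (npts mu q).
Variable e : 'I_N -> word n q.
Hypothesis agree_le : forall x y, x != y -> agree (e x) (e y) <= mu.

Let n_gt0 : 0 < n. Proof. by rewrite muln_gt0 mu_gt0 ltnW. Qed.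
Let i0 : 'I_n := Ordinal n_gt0.
Let card_T := card_points mu q.
Let fibre_nonempty := fibre_nonempty mu_gt0 q_gt1 card_T agree_le.
Let fibre_inj := fibre_inj mu_gt0 q_gt1 card_T agree_le.
Let pclass_eqE := pclass_eqE mu_gt0 q_gt1 card_T agree_le.
Let card_pclasses := card_pclasses mu_gt0 q_gt1 card_T agree_le.

Lemma blocks_through x y :
  #|[set b in fibres e | (x \in b) && (y \in b)]| = agree (e x) (e y).
Proof.
rewrite /agree -(card_in_imset (f := fun i => fibre e i (e x i))); last first.
  by move=> i j _ _ /fibre_inj [].
apply: eq_card => b; rewrite [in LHS]inE.
apply/andP/imsetP => [[/imset2P[i a _ _ ->] /andP[xb yb]] | [i]].
  by exists i; move: xb yb; rewrite !inE => /eqP -> // /eqP ->.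
rewrite inE => /eqP eq_i ->; split; first exact: imset2_f.
by rewrite !inE eq_i !eqxx.
Qed.

Lemma coord_fibres_partition i : partition [set fibre e i a | a : 'I_q] [set: 'I_N].
Proof.
apply/and3P; split.
- apply/eqP/setP => x; rewrite inE; apply/bigcupP.
  by exists (fibre e i (e x i)); [exact: imset_f | rewrite inE].
- apply/trivIsetP => _ _ /imsetP[a _ ->] /imsetP[b _ ->] ab.
  apply/pred0P => z /=; rewrite !inE; apply: contraNF ab.
  by case/andP => /eqP <- /eqP <-.
- by apply/imsetP => [[a _ eq_a]]; have [x] := fibre_nonempty i a; rewrite -eq_a inE.
Qed.

Definition fibre_coord (b : {set 'I_N}) : 'I_n :=
  if [pick i | [exists a, b == fibre e i a]] is Some i then i else i0.

Lemma fibre_coordE i a : fibre_coord (fibre e i a) = i.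
Proof.
rewrite /fibre_coord; case: pickP => [j /existsP[b /eqP /fibre_inj [-> _]] // | no_i].
by move/existsP: (no_i i); case; exists a.
Qed.

(* Axioms (s1) and (s2), with the fibres of coordinate i as the i-th class. *)
Lemma fibre_net_block_classes :
  exists c : {set 'I_N} -> 'I_n,
    (forall i, partition [set b in fibres e | c b == i] [set: 'I_N]) /\
    (forall b1 b2, b1 \in fibres e -> b2 \in fibres e -> c b1 != c b2 ->
       #|b1 :&: b2| = mu).
Proof.
exists fibre_coord; split => [i | _ _ /imset2P[i a _ _ ->] /imset2P[j b _ _ ->]].
  have -> : [set b in fibres e | fibre_coord b == i] = [set fibre e i a | a : 'I_q].
    apply/setP => b; rewrite !inE; apply/andP/imsetP.
      by case=> /imset2P[j a _ _ ->]; rewrite fibre_coordE => /eqP ->; exists a.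
    by case=> a _ ->; rewrite fibre_coordE eqxx; split; first exact: imset2_f.
  exact: coord_fibres_partition.
by rewrite !fibre_coordE; apply: (fibre_meet mu_gt0 q_gt1 card_T agree_le).
Qed.

(* Axiom (s3): the point parallel classes are the classes of "parallel". *)
Lemma fibre_net_point_classes :
  exists p : 'I_N -> 'I_n,
    (forall i, #|[set x | p x == i]| = q) /\
    (forall x y, x != y ->
       #|[set b in fibres e | (x \in b) && (y \in b)]| = (if p x != p y then mu else 0)).
Proof.
pose p := image_label card_pclasses.
exists p; split => [i | x y xy].
  have [x0 <-] := image_label_onto card_pclasses i.
  apply: etrans (pclass_card mu_gt0 q_gt1 card_T agree_le x0); apply: eq_card => x.
  by rewrite [in LHS]inE image_label_eq pclass_eqE inE parallel_sym.
rewrite blocks_through (agree_dichotomy mu_gt0 q_gt1 card_T agree_le xy).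
by rewrite image_label_eq pclass_eqE /parallel (negbTE xy); case: apart.
Qed.

Lemma fibre_net : sym_net (fibres e).
Proof.
split; first by move=> _ /imset2P[i a _ _ ->]; apply: (fibre_card mu_gt0 q_gt1 card_T agree_le).
by split; [exact: fibre_net_block_classes | exact: fibre_net_point_classes].
Qed.

End FibreNet.

(* Conversely every symmetric net is a fibre net: coordinate i of the word of
   x is the label of the block through x in the i-th block parallel class. *)
Section NetWords.
Variables mu q : nat.
Hypotheses (mu_gt0 : 0 < mu) (q_gt0 : 0 < q).
Local Notation n := (mu * q).
Local Notation N := (npts mu q).
Variable B : {set {set 'I_N}}.
Hypothesis block_size : forall b, b \in B -> #|b| = n.
Variable c : {set 'I_N} -> 'I_n.
Local Notation class i := [set b in B | c b == i].
Hypothesis class_partition : forall i, partition (class i) [set: 'I_N].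

Let n_gt0 : 0 < n. Proof. by rewrite muln_gt0 mu_gt0. Qed.

Let class_triv i : trivIset (class i). Proof. by case/and3P: (class_partition i). Qed.
Let class_cover i x : x \in cover (class i).
Proof. by case/and3P: (class_partition i) => /eqP ->. Qed.

Let block_nonempty b : b \in B -> exists x, x \in b.
Proof. by move=> bB; apply/set0Pn; rewrite -card_gt0 block_size. Qed.

Lemma pblock_class i x : pblock (class i) x \in class i.
Proof. exact/pblock_mem/class_cover. Qed.

Lemma pblock_block b x : b \in B -> x \in b -> pblock (class (c b)) x = b.
Proof. by move=> bB xb; apply: (def_pblock (class_triv (c b))) xb; rewrite inE bB eqxx. Qed.

Lemma class_blocks i : [set pblock (class i) x | x in 'I_N] = class i.
Proof.
apply/setP => b; apply/imsetP/idP => [[x _ ->] | ]; first exact: pblock_class.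
rewrite inE => /andP[bB /eqP <-].
by have [x xb] := block_nonempty bB; exists x; rewrite ?pblock_block.
Qed.

Lemma class_card i : #|[set pblock (class i) x | x in 'I_N]| = q.
Proof.
rewrite class_blocks; have := card_partition (class_partition i).
rewrite cardsT card_points (eq_bigr (fun _ => n)) => [|b].
  by rewrite sum_nat_const => /eqP; rewrite eqn_pmul2r // => /eqP.
by rewrite inE => /andP[/block_size].
Qed.

Definition net_word (x : 'I_N) : word n q := [ffun i => image_label (class_card i) x].

Lemma net_word_eq i x y : (net_word x i == net_word y i) = (y \in pblock (class i) x).
Proof. by rewrite !ffunE image_label_eq eq_pblock. Qed.

Lemma fibres_net_word : fibres net_word = B.
Proof.
apply/setP => b; apply/imset2P/idP => [[i a _ _ ->] | bB].
  have [x0 eq_a] := image_label_onto (class_card i) a.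
  have -> : fibre net_word i a = pblock (class i) x0.
    apply/setP => x; rewrite inE -eq_a.
    have <- : net_word x0 i = image_label (class_card i) x0 by rewrite ffunE.
    by rewrite eq_sym net_word_eq.
  by have := pblock_class i x0; rewrite inE => /andP[].
have [x0 xb] := block_nonempty bB.
exists (c b) (net_word x0 (c b)) => //.
by apply/setP => x; rewrite inE eq_sym net_word_eq pblock_block.
Qed.

Lemma agree_net_word x y :
  agree (net_word x) (net_word y) = #|[set b in B | (x \in b) && (y \in b)]|.
Proof.
rewrite /agree -(card_in_imset (f := fun i => pblock (class i) x)); last first.
  move=> i j _ _ /= eq_ij.
  move: (pblock_class i x) (pblock_class j x).
  by rewrite eq_ij !inE => /andP[_ /eqP <-] /andP[_ /eqP].
apply: eq_card => b; rewrite [in RHS]inE.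
apply/imsetP/andP => [[i] | [bB /andP[xb yb]]].
  rewrite inE net_word_eq => yi ->; split.
    by have := pblock_class i x; rewrite inE => /andP[].
  by rewrite yi andbT mem_pblock class_cover.
by exists (c b); rewrite ?inE ?net_word_eq pblock_block.
Qed.

End NetWords.

Lemma net_is_fibre_net mu q (B : {set {set 'I_(npts mu q)}}) :
  0 < mu -> 0 < q -> sym_net B ->
  exists w : 'I_(npts mu q) -> word (mu * q) q,
    fibres w = B /\ forall x y, x != y -> agree (w x) (w y) <= mu.
Proof.
move=> mu_gt0 q_gt0 [block_size [[c [class_partition _]] [p [_ pair_count]]]].
exists (net_word mu_gt0 q_gt0 block_size class_partition); split; first exact: fibres_net_word.
by move=> x y xy; rewrite agree_net_word pair_count //; case: ifP.
Qed.

Definition code_map n q (s : {perm 'I_n}) (t : 'I_n -> {perm 'I_q}) (u : word n q) :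
  word n q := [ffun i => t i (u (s i))].

Lemma code_map_inj n q s t : injective (@code_map n q s t).
Proof.
move=> u v /ffunP eq_uv; apply/ffunP => j.
by have := eq_uv (s^-1%g j); rewrite !ffunE permKV => /perm_inj.
Qed.

Lemma code_map1 n q (u : word n q) : code_map 1%g (fun _ => 1%g) u = u.
Proof. by apply/ffunP => i; rewrite ffunE !perm1. Qed.

Lemma fibres_transport (T : finType) n q (e e' : T -> word n q) (phi : {perm T}) s t :
  (forall x, e' (phi x) = code_map s t (e x)) ->
  [set (fun x => phi x) @: b | b : {set T} in fibres e] = fibres e'.
Proof.
move=> e'E.
have fibreE i a : phi @: fibre e i a = fibre e' (s^-1%g i) (t (s^-1%g i) a).
  apply/setP => y; rewrite -[y](permKV phi) mem_imset; last exact: perm_inj.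
  by rewrite !inE e'E ffunE permKV (inj_eq perm_inj).
apply/setP => b; apply/imsetP/imset2P => [[_ /imset2P[i a _ _ ->] ->] | [j b' _ _ ->]].
  by exists (s^-1%g i) (t (s^-1%g i) a).
exists (fibre e (s j) ((t j)^-1%g b')); first exact: imset2_f.
by rewrite fibreE permK permKV.
Qed.

Lemma fibres_relabel (T : finType) n q (e e' : T -> word n q) (phi : {perm T}) :
  (forall x, e' (phi x) = e x) ->
  [set (fun x => phi x) @: b | b : {set T} in fibres e] = fibres e'.
Proof.
by move=> e'E; apply: (fibres_transport (s := 1%g) (t := fun _ => 1%g)) => x; rewrite e'E code_map1.
Qed.

Lemma perm_matching (T : finType) (U : eqType) (f g : T -> U) : injective g ->
  (forall x, exists y, f y = g x) -> exists phi : {perm T}, forall x, f (phi x) = g x.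
Proof.
move=> g_inj onto_g; pose h x := odflt x [pick y | f y == g x].
have hE x : f (h x) = g x.
  rewrite /h; case: pickP => [y /eqP // | none].
  by have [y /eqP] := onto_g x; rewrite none.
have h_inj : injective h by move=> x y eq_h; apply: g_inj; rewrite -!hE eq_h.
by exists (perm h_inj) => x; rewrite permE.
Qed.

Section Rigidity.
Variables (T : finType) (mu q : nat).
Hypotheses (mu_gt0 : 0 < mu) (q_gt1 : 1 < q).
Local Notation n := (mu * q).
Hypothesis card_T : #|T| = q * n.
Variables e1 e2 : T -> word n q.
Hypothesis agree_le1 : forall x y, x != y -> agree (e1 x) (e1 y) <= mu.
Hypothesis agree_le2 : forall x y, x != y -> agree (e2 x) (e2 y) <= mu.
Hypothesis same_fibres : fibres e1 = fibres e2.

Let a0 : 'I_q := Ordinal (ltnW q_gt1).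
Let fibre_meet1 := fibre_meet mu_gt0 q_gt1 card_T agree_le1.
Let fibre_meet2 := fibre_meet mu_gt0 q_gt1 card_T agree_le2.
Let fibre_inj2 := fibre_inj mu_gt0 q_gt1 card_T agree_le2.

Definition fibre_match (i : 'I_n) (a : 'I_q) : 'I_n * 'I_q :=
  odflt (i, a) [pick jb | fibre e2 i a == fibre e1 jb.1 jb.2].

Lemma fibre_matchE i a : fibre e2 i a = fibre e1 (fibre_match i a).1 (fibre_match i a).2.
Proof.
rewrite /fibre_match; case: pickP => [jb /eqP // | none].
have : fibre e2 i a \in fibres e1 by rewrite same_fibres imset2_f.
by case/imset2P => j b _ _ eq_jb; have := none (j, b); rewrite eq_jb eqxx.
Qed.

Lemma fibre_match_coord i a b : (fibre_match i a).1 = (fibre_match i b).1.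
Proof.
have [-> // | ab] := eqVneq a b; apply/eqP; apply: contraT => ij.
have := fibre_meet1 (fibre_match i a).2 (fibre_match i b).2 ij.
by rewrite -!fibre_matchE disjoint_fibres // => mu0; move: mu_gt0; rewrite -mu0.
Qed.

Definition coord_match i := (fibre_match i a0).1.

(* Fibres of distinct coordinates of e2 meet in mu > 0 points, so they cannot
   match two disjoint fibres of one coordinate of e1, nor the same fibre. *)
Lemma coord_match_inj : injective coord_match.
Proof.
move=> i1 i2 eq_i; apply/eqP; apply: contraT => i12.
have := fibre_meet2 a0 a0 i12.
rewrite !fibre_matchE -/(coord_match i1) -/(coord_match i2) eq_i.
have [eq_t | neq_t] := eqVneq (fibre_match i1 a0).2 (fibre_match i2 a0).2.
  suff /fibre_inj2 [eq_12 _] : fibre e2 i1 a0 = fibre e2 i2 a0 by rewrite eq_12 eqxx in i12.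
  by rewrite !fibre_matchE -/(coord_match i1) -/(coord_match i2) eq_i eq_t.
by rewrite disjoint_fibres // => mu0; move: mu_gt0; rewrite -mu0.
Qed.

Lemma symbol_match_inj i : injective (fun a => (fibre_match i a).2).
Proof.
move=> a b /= eq_ab.
suff /fibre_inj2 [] : fibre e2 i a = fibre e2 i b by [].
by rewrite !fibre_matchE eq_ab (fibre_match_coord i a b).
Qed.

Lemma rigidity : exists s t, forall x, e2 x = code_map s t (e1 x).
Proof.
exists (perm coord_match_inj), (fun i => (perm (@symbol_match_inj i))^-1%g) => x.
apply/ffunP => i; rewrite ffunE.
have : x \in fibre e2 i (e2 x i) by rewrite inE.
rewrite fibre_matchE inE => /eqP eq_x.
apply: (@perm_inj _ (perm (@symbol_match_inj i))); rewrite permKV permE -eq_x permE.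
by rewrite /coord_match (fibre_match_coord i a0 (e2 x i)).
Qed.

End Rigidity.

Section CodeEnumeration.
Variables (mu q : nat) (w0 : word (mu * q) q) (C : {set word (mu * q) q}).
Hypothesis card_C : #|C| = npts mu q.

Definition code_enum (x : 'I_(npts mu q)) : word (mu * q) q := nth w0 (enum C) x.

Lemma code_enum_inj : injective code_enum.
Proof.
move=> x y /eqP; rewrite /code_enum nth_uniq ?enum_uniq -?cardE ?card_C //.
by move/eqP/val_inj.
Qed.

Lemma code_enum_in x : code_enum x \in C.
Proof. by rewrite -mem_enum /code_enum mem_nth // -cardE card_C. Qed.

Lemma code_enum_onto u : u \in C -> exists x, code_enum x = u.
Proof.
move=> uC; have lt_u : index u (enum C) < npts mu q.
  by rewrite -card_C cardE index_mem mem_enum.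
by exists (Ordinal lt_u); rewrite /code_enum /= nth_index // mem_enum.
Qed.

Lemma code_enum_image : [set code_enum x | x : 'I_(npts mu q)] = C.
Proof.
apply/setP => u; apply/imsetP/idP => [[x _ ->] | uC]; first exact: code_enum_in.
by have [x <-] := code_enum_onto uC; exists x.
Qed.

End CodeEnumeration.

Lemma net_iso_sym mu q (B B' : {set {set 'I_(npts mu q)}}) : net_iso B B' -> net_iso B' B.
Proof.
case=> phi <-; exists phi^-1%g.
rewrite -imset_comp -[RHS]imset_id; apply: eq_imset => b /=.
by rewrite -imset_comp -[RHS]imset_id; apply: eq_imset => x /=; rewrite permK.
Qed.

Lemma net_iso_trans mu q (B1 B2 B3 : {set {set 'I_(npts mu q)}}) :
  net_iso B1 B2 -> net_iso B2 B3 -> net_iso B1 B3.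
Proof.
case=> phi1 <- [phi2 <-]; exists (phi1 * phi2)%g.
rewrite -imset_comp; apply: eq_imset => b /=.
by rewrite -imset_comp; apply: eq_imset => x /=; rewrite permM.
Qed.

(* Good codes versus nets, through the fibre net of an enumeration of the code;
   w0 is only the default value of the enumeration. *)
Section CodesAndNets.
Variables mu q : nat.
Hypotheses (mu_gt0 : 0 < mu) (q_gt1 : 1 < q).
Local Notation n := (mu * q).
Local Notation N := (npts mu q).
Local Notation W := (word n q).
Variable w0 : W.

Let mu_lt_n : mu < n. Proof. by rewrite -{1}[mu]muln1 ltn_pmul2l. Qed.

Lemma good_code_agree (C : {set W}) : good_code C ->
  forall u v, u \in C -> v \in C -> u != v -> agree u v <= mu.
Proof.
case=> _ dist_C u v uC vC uv.
by have := dist_C u v uC vC uv; have := hamming_agree u v; lia.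
Qed.

Definition code_net (C : {set W}) := fibres (code_enum w0 C).

Lemma code_enum_agree (C : {set W}) : good_code C ->
  forall x y, x != y -> agree (code_enum w0 C x) (code_enum w0 C y) <= mu.
Proof.
move=> good_C x y xy; have [card_C _] := good_C.
by apply: (good_code_agree good_C);
  rewrite ?(code_enum_in w0 card_C) ?(inj_eq (code_enum_inj card_C)).
Qed.

Lemma code_net_sym (C : {set W}) : good_code C -> sym_net (code_net C).
Proof. by move=> good_C; apply: fibre_net mu_gt0 q_gt1 _ (code_enum_agree good_C). Qed.

Lemma tight_word_map_inj (w : 'I_N -> W) :
  (forall x y, x != y -> agree (w x) (w y) <= mu) -> injective w.
Proof.
move=> agree_le x y eq_w; apply/eqP; apply: contraT => xy.
by have := agree_le x y xy; rewrite eq_w agree_self leqNgt mu_lt_n.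
Qed.

Lemma tight_word_map_code (w : 'I_N -> W) :
  (forall x y, x != y -> agree (w x) (w y) <= mu) -> good_code [set w x | x : 'I_N].
Proof.
move=> agree_le; split.
  by rewrite card_imset ?card_ord //; apply: tight_word_map_inj.
move=> _ _ /imsetP[x _ ->] /imsetP[y _ ->] wxy.
have xy : x != y by apply: contraNneq wxy => ->.
by have := agree_le x y xy; have := hamming_agree (w x) (w y); lia.
Qed.

Lemma net_code (B : {set {set 'I_N}}) :
  sym_net B -> exists C, good_code C /\ net_iso B (code_net C).
Proof.
move=> net_B; have [w [<- agree_le]] := net_is_fibre_net mu_gt0 (ltnW q_gt1) net_B.
set C := [set w x | x : 'I_N]; have good_C : good_code C := tight_word_map_code agree_le.
have [card_C _] := good_C; exists C; split => //.
have [phi phiE] : exists phi : {perm 'I_N}, forall x, code_enum w0 C (phi x) = w x.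
  apply: perm_matching => [|x]; first exact: tight_word_map_inj agree_le.
  by apply: (code_enum_onto w0 card_C); exact: imset_f.
by exists phi; apply: fibres_relabel.
Qed.

(* Equivalent codes have isomorphic fibre nets: match the enumerations. *)
Lemma equiv_net_iso (C C' : {set W}) : good_code C -> good_code C' ->
  code_equiv C C' -> net_iso (code_net C) (code_net C').
Proof.
move=> [card_C _] [card_C' _] [s [t C'E]].
have [phi phiE] : exists phi : {perm 'I_N}, forall x,
    code_enum w0 C' (phi x) = code_map s t (code_enum w0 C x).
  apply: perm_matching => [x y /code_map_inj /(code_enum_inj card_C) // | x].
  by apply: (code_enum_onto w0 card_C'); rewrite C'E imset_f // code_enum_in.
by exists phi; apply: fibres_transport phiE.
Qed.

(* Conversely an isomorphism phi makes code_enum C' \o phi a word map with the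
   fibres of code_enum C; rigidity provides the code equivalence. *)
Lemma net_iso_equiv (C C' : {set W}) : good_code C -> good_code C' ->
  net_iso (code_net C) (code_net C') -> code_equiv C C'.
Proof.
move=> good_C good_C' [phi phiE]; have [card_C _] := good_C; have [card_C' _] := good_C'.
pose e2 x := code_enum w0 C' (phi x).
have same_fibres : fibres (code_enum w0 C) = fibres e2.
  apply: (imset_inj (imset_inj (@perm_inj _ phi))).
  by rewrite phiE; symmetry; apply: fibres_relabel.
have agree_le2 x y : x != y -> agree (e2 x) (e2 y) <= mu.
  by move=> xy; apply: code_enum_agree; rewrite ?(inj_eq perm_inj).
have [s [t e2E]] :=
  rigidity mu_gt0 q_gt1 (card_points mu q) (code_enum_agree good_C) agree_le2 same_fibres.
exists s, t; rewrite -(code_enum_image w0 card_C') -(code_enum_image w0 card_C) -imset_comp.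
apply/setP => u; apply/imsetP/imsetP => [[y _ ->] | [x _ ->]].
  by exists (phi^-1%g y) => //; have := e2E (phi^-1%g y); rewrite /e2 permKV.
by exists (phi x) => //; have := e2E x; rewrite /e2 => ->.
Qed.

End CodesAndNets.

(* F B is a good code whose fibre net is isomorphic to B (chosen by epsilon);
   iso/equivalence transfer through these isomorphisms, and every good code C
   is the image of its own fibre net. *)
Theorem theorem5p13 (mu q : nat) (hmu : (0 < mu)%N) (hq : (2 <= q)%N) :
  exists F : {set {set 'I_(npts mu q)}} -> {set word (mu * q) q},
    (forall B, @sym_net mu q B -> @good_code mu q (F B)) /\
    (forall B B', @sym_net mu q B -> @sym_net mu q B' ->
       (net_iso B B' <-> code_equiv (F B) (F B'))) /\
    (forall C, @good_code mu q C -> exists B, @sym_net mu q B /\ code_equiv (F B) C).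
Proof.
pose w0 : word (mu * q) q := [ffun _ => Ordinal (ltnW hq)].
pose F B := epsilon (inhabits set0) (fun C => good_code C /\ net_iso B (code_net w0 C)).
have FS B : sym_net B -> good_code (F B) /\ net_iso B (code_net w0 (F B)).
  by move=> net_B; exact: epsilon_spec (net_code hmu hq w0 net_B).
exists F; split; first by move=> B /FS [].
split=> [B B' /FS [good_B iso_B] /FS [good_B' iso_B'] | C good_C].
  split=> [iso | equiv].
    apply: (net_iso_equiv hmu hq good_B good_B').
    exact: net_iso_trans (net_iso_sym iso_B) (net_iso_trans iso iso_B').
  apply: (net_iso_trans iso_B); apply: net_iso_trans (net_iso_sym iso_B').
  exact: equiv_net_iso.
have net_C := code_net_sym hmu hq w0 good_C.
exists (code_net w0 C); split => //; have [good_F iso_F] := FS _ net_C.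
exact: (net_iso_equiv hmu hq good_F good_C (net_iso_sym iso_F)).
Qed.
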